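(* Consider a finite discounted stochastic game that is weakly acyclic (under multi-DM strict best replies). For each $i$ let $\lambda^i\in(0,1)$, $\gamma^i,\kappa^i\in(0,1)$, and let the DMs update policies by the Idealized Update Procedure with $h^i=R^{i,\lambda^i}$ for every $i$; let $A_{\bm{\gamma},\bm{\kappa}}$ be the transition matrix of the induced time-homogeneous Markov chain on $\bm{\Pi}$ and $\mu^*_{\bm{\gamma},\bm{\kappa}}$ its unique stationary distribution. Then for every $\epsilon>0$ there exists $\bar\kappa_\epsilon\in(0,1)$ such that whenever $\max\{\gamma^i,\kappa^i\}\in(0,\bar\kappa_\epsilon)$ for all $i$, \[ \mu^*_{\bm{\gamma},\bm{\kappa}}(\bm{\Pi}_{\rm eq})\ge 1-\epsilon/4 . \] Moreover, there exists $\bar m\in\mathbb{N}$, which can be chosen uniformly over all such $\bm{\gamma},\bm{\kappa}$, such that \[ \inf_{m\ge\bar m,\ \mu_0\in\mathcal{P}(\bm{\Pi})}\big(\mu_0A^m_{\bm{\gamma},\bm{\kappa}}\big)(\bm{\Pi}_{\rm eq})\ge 1-\epsilon/2 . \]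
   Context: Game setup: a finite discounted stochastic game with $N$ decision makers, finite state set $\mathbb{X}$, finite action sets $\mathbb{U}^i$, discount factors $\beta^i\in(0,1)$, costs $c^i:\mathbb{X}\times\mathbb{U}\to\mathbb{R}$, transition kernel $P(\cdot\mid x,\mathbf{u})$. $\Pi^i$ = set of maps $\mathbb{X}\to\mathbb{U}^i$, $\bm{\Pi}=\times_i\Pi^i$, $\bm{\pi}=(\pi^i,\bm{\pi}^{-i})$. $J^i_x(\bm{\pi})=E[\sum_{t\ge0}(\beta^i)^tc^i(x_t,\bm{\pi}(x_t))\mid x_0=x]$, $x_{t+1}\sim P(\cdot\mid x_t,\bm{\pi}(x_t))$. $\pi^i$ is a best reply to $\bm{\pi}^{-i}$ if $J^i_x(\pi^i,\bm{\pi}^{-i})=\min_{\sigma^i\in\Pi^i}J^i_x(\sigma^i,\bm{\pi}^{-i})$ for all $x$; $\mathrm{BR}^i(\bm{\pi}^{-i})$ is the set of such $\pi^i$. A best reply $\tilde\pi^i$ to $\bm{\pi}^{-i}$ is a strict best reply with respect to $\bm{\pi}=(\pi^i,\bm{\pi}^{-i})$ if $J^i_x(\tilde\pi^i,\bm{\pi}^{-i})<J^i_x(\pi^i,\bm{\pi}^{-i})$ for some $x$. $\bm{\Pi}_{\rm eq}=\{\bm{\pi}\in\bm{\Pi}:\pi^i\in\mathrm{BR}^i(\bm{\pi}^{-i})\ \forall i\}$. $\bm{\Pi}_{\rm opt}=\{\bm{\pi}^*:J^i_x(\bm{\pi}^* )=\inf_{\bm{\pi}}J^i_x(\bm{\pi})\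 \forall i,x\}$ (possibly empty). A sequence $\bm{\pi}_0,\bm{\pi}_1,\dots$ in $\bm{\Pi}$ is a multi-DM strict best reply path if for each $k$, $\bm{\pi}_k\ne\bm{\pi}_{k+1}$ and for every $i$ with $\pi^i_{k+1}\neq\pi^i_k$, $\pi^i_{k+1}$ is a strict best reply with respect to $\bm{\pi}_k$. The game is weakly acyclic if from every $\bm{\pi}\in\bm{\Pi}$ there is a (finite) multi-DM strict best reply path starting at $\bm{\pi}$ and ending in $\bm{\Pi}_{\rm eq}$. Inertial kernel $R^{i,\lambda}(\tilde\pi^i\mid\pi^i,B^i)$: $1$ if $\pi^i\in B^i,\tilde\pi^i=\pi^i$; $\lambda$ if $\pi^i\notin B^i,\tilde\pi^i=\pi^i$; $(1-\lambda)/|B^i|$ if $\pi^i\notin B^i,\tilde\pi^i\in B^i$; $0$ otherwise. Idealized Update Procedure: given $\bm{\pi}_k$, DMs choose independently: if $\bm{\pi}_k\in\bm{\Pi}_{\rm opt}$, $\pi^i_{k+1}\sim(1-\gamma^i)R^{i,\lambda^i}(\cdot\mid\pi^i_k,\mathrm{BR}^i(\bm{\pi}^{-i}_k))+\gamma^i\mathrm{Unif}(\Pi^i)$; otherwise $\pi^i_{k+1}\sim(1-\kappa^i)h^i(\cdot\mid\pi^i_k,\mathrm{BR}^i(\bm{\pi}^{-i}_k))+\kappa^i\mathrm{Unif}(\Pi^i)$. *)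

From HB Require Import structures.
From mathcomp Require Import all_boot.
From Stdlib Require Import Reals ClassicalEpsilon.
Set Implicit Arguments. Unset Strict Implicit. Unset Printing Implicit Defensive.

Local Open Scope R_scope.

Definition Rleb (a b : R) : bool := if Rle_dec a b then true else false.
Definition Rltb (a b : R) : bool := if Rlt_dec a b then true else false.

Definition rsum (T : finType) (f : T -> R) : R := \big[Rplus/0]_(t : T) f t.
Definition rsum_in (T : finType) (S : {set T}) (f : T -> R) : R :=
  \big[Rplus/0]_(t in S) f t.

Definition jact (N : nat) (U : 'I_N -> finType) : finType :=
  {dffun forall i : 'I_N, U i}.
Definition pol (N : nat) (X : finType) (U : 'I_N -> finType) (i : 'I_N) : finType :=
  {ffun X -> U i}.
Definition jpol (N : nat) (X : finType) (U : 'I_N -> finType) : finType :=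
  {dffun forall i : 'I_N, pol X U i}.

Record game (N : nat) (X : finType) (U : 'I_N -> finType) := Game {
  beta : 'I_N -> R;
  cost : 'I_N -> X -> jact U -> R;
  trans : X -> jact U -> X -> R
}.
Arguments game : clear implicits.

Definition game_ok N X U (G : game N X U) : Prop :=
  (forall i, 0 < beta G i < 1) /\
  (forall x u y, 0 <= trans G x u y) /\
  (forall x u, rsum (fun y => trans G x u y) = 1).

Definition act_of N X U (pi : jpol X U) (x : X) : jact U :=
  [ffun i : 'I_N => pi i x].

Definition upd N X U (pi : jpol X U) (i : 'I_N) (s : pol X U i) : jpol X U :=
  finfun (@dfwith _ (fun j => pol X U j) pi i s).
Arguments upd {N X U} pi i s.

(* E[c^i(x_t, pi(x_t)) | x_0 = x] under the Markov chain
   x_{t+1} ~ P(. | x_t, pi(x_t)) : computed by the t-step transition operator *)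
Fixpoint exp_cost N X U (G : game N X U) (i : 'I_N) (pi : jpol X U) (t : nat) (x : X)
  : R :=
  match t with
  | O => cost G i x (act_of pi x)
  | S t' => rsum (fun y => trans G x (act_of pi x) y * exp_cost G i pi t' y)
  end.

(* J^i_x(pi) = sum_{t>=0} beta^t E[c^i(x_t,pi(x_t)) | x_0 = x], the limit of the
   partial sums (the series always converges since beta^i in (0,1)). *)
Definition Jcost N X U (G : game N X U) (i : 'I_N) (pi : jpol X U) (x : X) : R :=
  epsilon (inhabits 0)
    (fun v => Un_cv (fun n => sum_f_R0 (fun t => beta G i ^ t * exp_cost G i pi t x) n) v).

Definition BR N X U (G : game N X U) (i : 'I_N) (pi : jpol X U) : {set pol X U i} :=
  [set s : pol X U i | [forall x : X, [forall s' : pol X U i,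
       Rleb (Jcost G i (upd pi i s) x) (Jcost G i (upd pi i s') x)]]].

Definition strict_br N X U (G : game N X U) (i : 'I_N) (pi : jpol X U) (s : pol X U i)
  : bool :=
  (s \in BR G i pi) && [exists x : X, Rltb (Jcost G i (upd pi i s) x) (Jcost G i pi x)].

Definition Peq N X U (G : game N X U) : {set jpol X U} :=
  [set pi : jpol X U | [forall i : 'I_N, pi i \in BR G i pi]].

Definition Popt N X U (G : game N X U) : {set jpol X U} :=
  [set pi : jpol X U | [forall i : 'I_N, [forall x : X, [forall pi' : jpol X U,
       Rleb (Jcost G i pi x) (Jcost G i pi' x)]]]].

Definition sbr_step N X U (G : game N X U) (pi pi' : jpol X U) : bool :=
  (pi != pi') && [forall i : 'I_N, (pi' i != pi i) ==> strict_br G pi (pi' i)].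

Definition weakly_acyclic N X U (G : game N X U) : Prop :=
  forall pi : jpol X U, exists s : seq (jpol X U),
    path (@sbr_step N X U G) pi s && (last pi s \in Peq G).

Definition Rkern N X U (i : 'I_N) (lam : R) (s : pol X U i) (B : {set pol X U i})
    (s' : pol X U i) : R :=
  if s \in B then (if s' == s then 1 else 0)
  else if s' == s then lam
  else if s' \in B then (1 - lam) / INR #|B|
  else 0.

(* transition matrix A_{gamma,kappa} of the Idealized Update Procedure with
   h^i = R^{i,lambda^i} : DMs choose independently *)
Definition Amat N X U (G : game N X U) (lam gam kap : 'I_N -> R) (pi pi' : jpol X U) : R :=
  \big[Rmult/1]_(i : 'I_N)
    (let e := if pi \in Popt G then gam i else kap i in
     (1 - e) * Rkern (lam i) (pi i) (BR G i pi) (pi' i) + e / INR #|pol X U i|).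

Definition is_distr (T : finType) (mu : T -> R) : Prop :=
  (forall t, 0 <= mu t) /\ rsum mu = 1.

Definition vmul (T : finType) (mu : T -> R) (A : T -> T -> R) : T -> R :=
  fun q => rsum (fun p => mu p * A p q).

Fixpoint vmulpow (T : finType) (mu : T -> R) (A : T -> T -> R) (m : nat) : T -> R :=
  match m with
  | O => mu
  | S m' => vmul (vmulpow mu A m') A
  end.

Definition stationary (T : finType) (A : T -> T -> R) (mu : T -> R) : Prop :=
  is_distr mu /\ (forall q, vmul mu A q = mu q).

Definition mass (T : finType) (mu : T -> R) (S : {set T}) : R := rsum_in S mu.

(* Write A for the transition matrix of the procedure with exploration rates
   gam, kap and A0 for the unperturbed matrix (gam = kap = 0).
   1. Discounted costs satisfy the Bellman equation, and a comparison
      principle for discounted averages shows that every DM has a best reply: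
      a policy minimising the summed deviation value admits no profitable
      one-state switch, hence dominates every other policy.  So every row of
      the inertial kernel, and of A, is a probability distribution.
   2. Under A0 every equilibrium is absorbing and every strict best reply step
      has positive probability.  Weak acyclicity therefore yields L and d > 0
      such that from any joint policy A0^L puts mass >= d on Peq; iterating,
      the mass of nu A0^(kL) outside Peq decays like (1 - d)^k.
   3. Entrywise A >= (1 - kbar)^N A0 when all rates are at most kbar, so
      nu A^M >= (1 - kbar)^(N M) nu A0^M, which is close to nu A0^M for kbar
      small (Bernoulli's inequality).  A stationary mu satisfies mu = mu A^M,
      and mu0 A^m = (mu0 A^(m-M)) A^M for m >= M, giving both claims. *)
From HB Require Import structures.
From mathcomp Require Import all_boot.
From Stdlib Require Import Reals Lra Lia ClassicalEpsilon FunctionalExtensionality.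
Local Open Scope R_scope.

Lemma RplusA : associative Rplus. Proof. by move=> *; rewrite Rplus_assoc. Qed.
Lemma RmultA : associative Rmult. Proof. by move=> *; rewrite Rmult_assoc. Qed.
HB.instance Definition _ := Monoid.isComLaw.Build R 0 Rplus RplusA Rplus_comm Rplus_0_l.
HB.instance Definition _ := Monoid.isComLaw.Build R 1 Rmult RmultA Rmult_comm Rmult_1_l.
HB.instance Definition _ := Monoid.isMulLaw.Build R 0 Rmult Rmult_0_l Rmult_0_r.
HB.instance Definition _ :=
  Monoid.isAddLaw.Build R Rmult Rplus Rmult_plus_distr_r Rmult_plus_distr_l.

Lemma RlebP a b : reflect (a <= b) (Rleb a b).
Proof. by rewrite /Rleb; case: Rle_dec => H; constructor. Qed.

Lemma RltbP a b : reflect (a < b) (Rltb a b).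
Proof. by rewrite /Rltb; case: Rlt_dec => H; constructor. Qed.

(* A sum over dependent functions of a product of independent factors
   factorises: this is why a product of independent kernels is a kernel. *)
Lemma sum_dffun_prod (I : finType) (T : I -> finType) (F : forall i, {ffun T i -> R}) :
  \big[Rplus/0]_(f : {dffun forall i, T i}) \big[Rmult/1]_(i : I) F i (f i)
  = \big[Rmult/1]_(i : I) \big[Rplus/0]_(t : T i) F i t.
Proof.
rewrite (eq_bigr _ (fun i _ => big_tag (fun i (t : T i) => F i t) i)).
rewrite bigA_distr_big_dep -(big_fprod 1 Rplus F).
rewrite (reindex (@fprod_of_dffun I T)); last exact/onW_bij/fprod_of_dffun_bij.
by apply: eq_bigr => f _; apply: eq_bigr => i _; rewrite fprodE.
Qed.

Lemma prod_le (I : finType) (a b : I -> R) : (forall i, 0 <= a i <= b i) ->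
  0 <= \big[Rmult/1]_(i : I) a i <= \big[Rmult/1]_(i : I) b i.
Proof.
move=> H; apply: (big_ind2 (fun x y => 0 <= x <= y)) => //; first lra.
move=> x1 x2 y1 y2 [? ?] [? ?]; split; first nra.
by apply: Rmult_le_compat.
Qed.

Lemma prod_gt0 (I : finType) (a : I -> R) : (forall i, 0 < a i) ->
  0 < \big[Rmult/1]_(i : I) a i.
Proof. by move=> H; apply: (big_ind (Rlt 0)) => //; [lra | move=> *; nra]. Qed.

Lemma prod_const (I : finType) (c : R) : \big[Rmult/1]_(i : I) c = c ^ #|I|.
Proof. by rewrite big_const; elim: #|I| => [|n IH] //; rewrite iterS IH. Qed.

Section FiniteSums.
Context {T : finType}.
Implicit Types (f g : T -> R) (S : {set T}).

Lemma big_le (r : seq T) (P : pred T) f g : (forall t, P t -> f t <= g t) ->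
  \big[Rplus/0]_(t <- r | P t) f t <= \big[Rplus/0]_(t <- r | P t) g t.
Proof. by move=> H; apply: (big_ind2 Rle) => //; [lra | move=> *; lra]. Qed.

Lemma big_ge0 (r : seq T) (P : pred T) f : (forall t, 0 <= f t) ->
  0 <= \big[Rplus/0]_(t <- r | P t) f t.
Proof. by move=> H; apply: (big_ind (Rle 0)) => //; [lra | move=> *; lra]. Qed.

Lemma rsum_le {f g} : (forall t, f t <= g t) -> rsum f <= rsum g.
Proof. by move=> H; apply: big_le. Qed.

Lemma rsum_ge0 f : (forall t, 0 <= f t) -> 0 <= rsum f.
Proof. exact: big_ge0. Qed.

Lemma rsum_in_le S f g : (forall t, t \in S -> f t <= g t) -> rsum_in S f <= rsum_in S g.
Proof. exact: big_le. Qed.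

Lemma rsum_in_ge0 S f : (forall t, 0 <= f t) -> 0 <= rsum_in S f.
Proof. exact: big_ge0. Qed.

Lemma rsum_in_term S f t0 : (forall t, 0 <= f t) -> t0 \in S -> f t0 <= rsum_in S f.
Proof.
move=> H H0; rewrite /rsum_in (bigD1 t0) //=.
have : 0 <= \big[Rplus/0]_(t in S | t != t0) f t by apply: big_ge0.
lra.
Qed.

Lemma rsum_term f t0 : (forall t, 0 <= f t) -> f t0 <= rsum f.
Proof.
move=> H; rewrite /rsum (bigD1 t0) //=.
have := big_ge0 (index_enum T) (fun t => t != t0) _ H; lra.
Qed.

Lemma rsum_lt {f g} t0 : (forall t, f t <= g t) -> f t0 < g t0 -> rsum f < rsum g.
Proof.
move=> H H0; rewrite /rsum (bigD1 t0) //= [X in _ < X](bigD1 t0) //=.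
have := big_le (index_enum T) (fun t => t != t0) f g (fun t _ => H t); lra.
Qed.

Lemma rsum_scal c f : rsum (fun t => c * f t) = c * rsum f.
Proof. by rewrite /rsum big_distrr. Qed.

Lemma rsum_in_scal S c f : rsum_in S (fun t => c * f t) = c * rsum_in S f.
Proof. by rewrite /rsum_in big_distrr. Qed.

Lemma rsum_add f g : rsum (fun t => f t + g t) = rsum f + rsum g.
Proof. by rewrite /rsum big_split. Qed.

Lemma rsum_ext {f g} : (forall t, f t = g t) -> rsum f = rsum g.
Proof. by move=> H; apply: eq_bigr. Qed.

Lemma rsum_split S f : rsum f = rsum_in S f + rsum_in (~: S) f.
Proof.
rewrite /rsum /rsum_in (bigID (fun t => t \in S)) /=; congr (_ + _).
by apply: eq_bigl => t; rewrite inE.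
Qed.

Lemma rsum_const c : rsum (fun _ : T => c) = INR #|T| * c.
Proof.
rewrite /rsum big_const cardE.
by elim: (size _) => [|n IH]; [simpl; lra | rewrite iterS IH S_INR; lra].
Qed.

Lemma rsum_exch (T' : finType) (F : T -> T' -> R) :
  rsum (fun t => rsum (fun t' => F t t')) = rsum (fun t' => rsum (fun t => F t t')).
Proof. by rewrite /rsum exchange_big. Qed.

Lemma avg_le (p : T -> R) f c : is_distr p -> (forall t, f t <= c) ->
  rsum (fun t => p t * f t) <= c.
Proof.
move=> [Hp Hp1] Hf.
apply: Rle_trans (rsum_le (g := fun t => c * p t) _) _.
  by move=> t; rewrite Rmult_comm; apply: Rmult_le_compat_r.
by rewrite rsum_scal Hp1; lra.
Qed.

Lemma avg_ge (p : T -> R) f c : is_distr p -> (forall t, c <= f t) ->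
  c <= rsum (fun t => p t * f t).
Proof.
move=> Hp Hf; have := avg_le p (fun t => - f t) (- c) Hp (fun t => Ropp_le_contravar _ _ (Hf t)).
rewrite (rsum_ext (g := fun t => -1 * (p t * f t))) ?rsum_scal => [|t]; lra.
Qed.

Lemma exists_max (t0 : T) f : exists t, forall t', f t' <= f t.
Proof.
suff [t Ht] : exists t, forall t', t' \in enum T -> f t' <= f t.
  by exists t => t'; apply: Ht; rewrite mem_enum.
elim: (enum T) => [|a s [t Ht]]; first by exists t0.
case: (Rle_lt_dec (f a) (f t)) => Hat.
  by exists t => t'; rewrite inE => /orP [/eqP -> //|]; apply: Ht.
by exists a => t'; rewrite inE => /orP [/eqP -> |/Ht]; lra.
Qed.

Lemma exists_min (t0 : T) f : exists t, forall t', f t <= f t'.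
Proof. by have [t Ht] := exists_max t0 (fun t => - f t); exists t => t'; have := Ht t'; lra. Qed.

End FiniteSums.

Lemma Un_cv_ext (u v : nat -> R) l : (forall n, u n = v n) -> Un_cv u l -> Un_cv v l.
Proof. by move=> H Hu e He; have [M HM] := Hu e He; exists M => n Hn; rewrite -H; apply: HM. Qed.
Arguments Un_cv_ext {u v l}.

Lemma Un_cv_const c : Un_cv (fun _ => c) c.
Proof. by move=> e He; exists O => n _; rewrite /Rdist Rminus_diag Rabs_R0; lra. Qed.

Lemma Un_cv_rsum (T : finType) (g : T -> nat -> R) (l : T -> R) :
  (forall t, Un_cv (g t) (l t)) -> Un_cv (fun n => rsum (fun t => g t n)) (rsum l).
Proof.
move=> H; rewrite /rsum; elim: (index_enum T) => [|t s IH].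
  by rewrite big_nil; apply: Un_cv_ext (Un_cv_const 0) => n; rewrite big_nil.
rewrite big_cons; apply: Un_cv_ext (CV_plus _ _ _ _ (H t) IH) => n.
by rewrite big_cons.
Qed.

Lemma discounted_series_cv (a : nat -> R) (b C : R) : 0 <= b < 1 ->
  (forall t, Rabs (a t) <= C) -> exists l, Un_cv (sum_f_R0 (fun t => b ^ t * a t)) l.
Proof.
move=> Hb Ha.
have Hgeom : {l | Un_cv (sum_f_R0 (fun t => C * b ^ t)) l}.
  have Hg := GP_infinite b; rewrite Rabs_pos_eq in Hg; last lra.
  exists (C * / (1 - b)).
  apply: Un_cv_ext (CV_mult _ _ _ _ (Un_cv_const C) (Hg ltac:(lra))) => n.
  by rewrite scal_sum; apply: sum_eq => k _; lra.
have [l Hl] : {l | Un_cv (sum_f_R0 (fun t => Rabs (b ^ t * a t))) l}.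
  apply: (Rseries_CV_comp _ _ _ Hgeom) => t; split; first exact: Rabs_pos.
  rewrite Rabs_mult Rabs_pos_eq; last by apply: pow_le; lra.
  by rewrite Rmult_comm; apply: Rmult_le_compat_r; [apply: pow_le; lra | apply: Ha].
have [l' Hl'] := cv_cauchy_2 _ (cauchy_abs _ (cv_cauchy_1 _ (exist _ l Hl))).
by exists l'.
Qed.

Lemma discounted_max_principle (T : finType) (P : T -> T -> R) (b : R) (d : T -> R) :
  0 <= b < 1 -> (forall x, is_distr (P x)) ->
  (forall x, d x <= b * rsum (fun y => P x y * d y)) -> forall x, d x <= 0.
Proof.
move=> Hb HP Hd x.
have [xm Hxm] := exists_max x d.
have Havg : rsum (fun y => P xm y * d y) <= d xm by apply: avg_le.
have := Hd xm; have := Hxm x.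
have : b * rsum (fun y => P xm y * d y) <= b * d xm by apply: Rmult_le_compat_l; lra.
nra.
Qed.

Section DiscountedCost.
Context {N : nat} {X : finType} {U : 'I_N -> finType} (G : game N X U).
Hypothesis HG : game_ok G.
Variable i : 'I_N.

Lemma trans_distr x u : is_distr (trans G x u).
Proof. by case: HG => _ [HP HP1]; split. Qed.

Definition cost_bound : R :=
  rsum (fun x => rsum (fun u : jact U => Rabs (cost G i x u))).

Lemma cost_le_bound x u : Rabs (cost G i x u) <= cost_bound.
Proof.
apply: Rle_trans (rsum_term (fun u => Rabs (cost G i x u)) u (fun _ => Rabs_pos _)) _.
exact: (rsum_term (fun x => rsum (fun u : jact U => Rabs (cost G i x u))) x
  (fun x => rsum_ge0 _ (fun _ => Rabs_pos _))).
Qed.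

(* Expected stage costs are averages of stage costs, hence equally bounded. *)
Lemma exp_cost_bound rho t x : Rabs (exp_cost G i rho t x) <= cost_bound.
Proof.
elim: t x => [|t IH] x /=; first exact: cost_le_bound.
have Hlo y : - cost_bound <= exp_cost G i rho t y.
  by have := IH y; have := Rle_abs (- exp_cost G i rho t y); rewrite Rabs_Ropp; lra.
have Hhi y : exp_cost G i rho t y <= cost_bound by apply: Rle_trans (Rle_abs _) (IH y).
apply: Rabs_le; split.
  by apply: avg_ge; [exact: trans_distr | exact: Hlo].
by apply: avg_le; [exact: trans_distr | exact: Hhi].
Qed.

Definition partial_cost (rho : jpol X U) (n : nat) (x : X) : R :=
  sum_f_R0 (fun t => beta G i ^ t * exp_cost G i rho t x) n.

Lemma Jcost_cv rho x : Un_cv (fun n => partial_cost rho n x) (Jcost G i rho x).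
Proof.
rewrite /Jcost; apply: epsilon_spec.
apply: (@discounted_series_cv _ _ cost_bound) => [|t]; last exact: exp_cost_bound.
by case: HG => Hb _; have := Hb i; lra.
Qed.

Lemma partial_cost_S rho n x : partial_cost rho n.+1 x =
  cost G i x (act_of rho x)
  + beta G i * rsum (fun y => trans G x (act_of rho x) y * partial_cost rho n y).
Proof.
elim: n => [|n IH].
  rewrite /partial_cost /= (rsum_ext (g := fun y =>
    trans G x (act_of rho x) y * cost G i y (act_of rho y))); first ring.
  by move=> y; ring.
have -> : partial_cost rho n.+2 x =
  partial_cost rho n.+1 x + beta G i ^ n.+2 * exp_cost G i rho n.+2 x by [].
rewrite IH.
rewrite [in RHS](rsum_ext (g := fun y => trans G x (act_of rho x) y * partial_cost rho n y
    + beta G i ^ n.+1 * (trans G x (act_of rho x) y * exp_cost G i rho n.+1 y))); last first.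
  by move=> y; rewrite [partial_cost _ n.+1 _]/partial_cost /= -/(partial_cost rho n y); ring.
rewrite rsum_add rsum_scal /=; ring.
Qed.

Lemma Jcost_bellman rho x : Jcost G i rho x =
  cost G i x (act_of rho x)
  + beta G i * rsum (fun y => trans G x (act_of rho x) y * Jcost G i rho y).
Proof.
apply: (UL_sequence (fun n => partial_cost rho n.+1 x)).
  by move=> e He; have [M HM] := Jcost_cv rho x e He; exists M => n Hn; apply: HM; lia.
set P := trans G x (act_of rho x).
have Hcont : Un_cv (fun n => rsum (fun y => P y * partial_cost rho n y))
                   (rsum (fun y => P y * Jcost G i rho y)).
  by apply: Un_cv_rsum => y; apply: CV_mult (Un_cv_const _) (Jcost_cv rho y).
apply: Un_cv_ext (CV_plus _ _ _ _ (Un_cv_const _)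
  (CV_mult _ _ _ _ (Un_cv_const (beta G i)) Hcont)) => n.
by rewrite partial_cost_S.
Qed.

End DiscountedCost.

Lemma upd_id N X U (pi : jpol X U) (i : 'I_N) : upd pi i (pi i) = pi.
Proof.
apply/ffunP => j; rewrite /upd ffunE.
by case: (eqVneq i j) => [<-|nij]; [rewrite dfwith_in | rewrite dfwith_out].
Qed.

(* Best replies exist: the single-agent problem faced by DM i against the
   fixed policies of the others is a finite discounted MDP. *)
Section BestReply.
Context {N : nat} {X : finType} {U : 'I_N -> finType} (G : game N X U).
Hypothesis HG : game_ok G.
Variables (i : 'I_N) (pi : jpol X U).

Definition dev_act (a : U i) (x : X) : jact U := act_of (upd pi i [ffun _ : X => a]) x.

Lemma act_of_upd (s : pol X U i) x : act_of (upd pi i s) x = dev_act (s x) x.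
Proof.
apply/ffunP => j; rewrite /dev_act /act_of /upd !ffunE.
by case: (eqVneq i j) => [<-|nij]; [rewrite !dfwith_in ffunE | rewrite !dfwith_out].
Qed.

Definition dev_value (s : pol X U i) (x : X) : R := Jcost G i (upd pi i s) x.

Definition lookahead (W : X -> R) (x : X) (a : U i) : R :=
  cost G i x (dev_act a x) + beta G i * rsum (fun y => trans G x (dev_act a x) y * W y).

Lemma dev_value_bellman s x : dev_value s x = lookahead (dev_value s) x (s x).
Proof. by rewrite /dev_value Jcost_bellman // act_of_upd. Qed.

Lemma lookahead_sub W W' x a : lookahead W x a - lookahead W' x a =
  beta G i * rsum (fun y => trans G x (dev_act a x) y * (W y - W' y)).
Proof.
rewrite /lookahead (rsum_ext (f := fun y => trans G x (dev_act a x) y * (W y - W' y))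
  (g := fun y => trans G x (dev_act a x) y * W y
                 + -1 * (trans G x (dev_act a x) y * W' y))); last by move=> y; ring.
rewrite rsum_add rsum_scal; ring.
Qed.

Lemma lookahead_mono W W' x a : (forall y, W y <= W' y) ->
  lookahead W x a <= lookahead W' x a.
Proof.
move=> H; have := lookahead_sub W W' x a.
have [Hb _] := HG; have := Hb i.
have : rsum (fun y => trans G x (dev_act a x) y * (W y - W' y)) <= 0.
  by apply: avg_le; [exact: trans_distr | move=> y; have := H y; lra].
nra.
Qed.

Lemma dev_value_le (s : pol X U i) W : (forall x, lookahead W x (s x) <= W x) ->
  forall x, dev_value s x <= W x.
Proof.
move=> H x; have [Hb _] := HG.
suff : dev_value s x - W x <= 0 by lra.
apply: (@discounted_max_principle _ (fun x y => trans G x (dev_act (s x) x) y) (beta G i)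
  (fun x => dev_value s x - W x)) => [|y|y]; [have := Hb i; lra | exact: trans_distr |].
by rewrite -lookahead_sub; have := H y; rewrite [dev_value s y]dev_value_bellman; lra.
Qed.

Lemma dev_value_ge (s : pol X U i) W : (forall x, W x <= lookahead W x (s x)) ->
  forall x, W x <= dev_value s x.
Proof.
move=> H x; have [Hb _] := HG.
suff : W x - dev_value s x <= 0 by lra.
apply: (@discounted_max_principle _ (fun x y => trans G x (dev_act (s x) x) y) (beta G i)
  (fun x => W x - dev_value s x)) => [|y|y]; [have := Hb i; lra | exact: trans_distr |].
by rewrite -lookahead_sub; have := H y; rewrite [dev_value s y]dev_value_bellman; lra.
Qed.

(* A policy minimising the total deviation value admits no improving switch
   at a single state, hence is a best reply. *)
Lemma BR_nonempty : exists s, s \in BR G i pi.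
Proof.
have [sm Hsm] := exists_min (pi i) (fun s => rsum (dev_value s)).
set W := dev_value sm.
have no_switch x0 a0 : W x0 <= lookahead W x0 a0.
  apply: Rnot_lt_le => Hlt.
  pose s' : pol X U i := [ffun x => if x == x0 then a0 else sm x].
  have Hs'W : forall x, dev_value s' x <= W x.
    apply: dev_value_le => x; rewrite ffunE; case: eqP => [->|_]; first lra.
    by apply: Req_le; symmetry; apply: dev_value_bellman.
  have Hx0 : dev_value s' x0 < W x0.
    rewrite dev_value_bellman ffunE eqxx.
    by apply: Rle_lt_trans (lookahead_mono _ _ _ _ Hs'W) Hlt.
  have Hsum : rsum (dev_value s') < rsum (dev_value sm) := rsum_lt x0 Hs'W Hx0.
  by have := Hsm s'; lra.
exists sm; rewrite inE; apply/forallP => x; apply/forallP => s; apply/RlebP.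
exact: (@dev_value_ge s W (fun y => no_switch y (s y)) x).
Qed.

End BestReply.

Section InertialKernel.
Context {N : nat} {X : finType} {U : 'I_N -> finType} {i : 'I_N}.
Variables (lam : R) (s : pol X U i) (B : {set pol X U i}).
Hypothesis Hlam : 0 < lam < 1.

Lemma card_gt0_INR {b : pol X U i} : b \in B -> 0 < INR #|B|.
Proof. by move=> Hb; apply: lt_0_INR; apply/ltP/card_gt0P; exists b. Qed.

Lemma Rkern_ge0 s' : 0 <= Rkern lam s B s'.
Proof.
rewrite /Rkern; case: (s \in B); first by case: (s' == s); lra.
case: (s' == s); first lra.
case Hs': (s' \in B); last lra.
by apply: Rle_mult_inv_pos; [lra | exact: card_gt0_INR Hs'].
Qed.

Lemma Rkern_sum : (exists b, b \in B) -> rsum (Rkern lam s B) = 1.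
Proof.
move=> [b Hb]; have HB := card_gt0_INR Hb.
rewrite /rsum (bigD1 s) //= /Rkern eqxx; case Hs: (s \in B).
  by rewrite big1 ?Rplus_0_r // => s' /negbTE ->.
rewrite (eq_bigr (fun s' => if s' \in B then (1 - lam) / INR #|B| else 0)); last first.
  by move=> s' /negbTE ->.
rewrite -big_mkcondr /= (eq_bigl (fun s' => s' \in B)); last first.
  move=> s'; apply/andP/idP => [[] //|Hs']; split => //.
  by apply/eqP => E; rewrite E Hs in Hs'.
rewrite big_const.
have -> : forall n c, iter n (Rplus c) 0 = INR n * c.
  by elim => [|n IH] c; [simpl; lra | rewrite iterS IH S_INR; lra].
set n := INR _ in HB *; field; lra.
Qed.

Lemma Rkern_stay : s \in B -> Rkern lam s B s = 1.
Proof. by rewrite /Rkern eqxx => ->. Qed.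

Lemma Rkern_keep_pos : 0 < Rkern lam s B s.
Proof. by rewrite /Rkern eqxx; case: (s \in B); lra. Qed.

Lemma Rkern_switch_pos s' : s \notin B -> s' \in B -> 0 < Rkern lam s B s'.
Proof.
move=> Hs Hs'; have Hne : s' != s by apply/eqP => E; move: Hs; rewrite -E Hs'.
rewrite /Rkern (negbTE Hs) (negbTE Hne) Hs'.
by apply: Rlt_mult_inv_pos; [lra | exact: card_gt0_INR Hs'].
Qed.

End InertialKernel.

Section MarkovOperators.
Context {T : finType}.
Implicit Types (nu : T -> R) (A : T -> T -> R) (S : {set T}).

Definition stochastic A : Prop := forall p, is_distr (A p).

Lemma stochastic_ge0 A : stochastic A -> forall p q, 0 <= A p q.
Proof. by move=> HA p q; case: (HA p). Qed.

Definition delta (p : T) : T -> R := fun q => if q == p then 1 else 0.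

Lemma delta_ge0 p q : 0 <= delta p q.
Proof. by rewrite /delta; case: (q == p); lra. Qed.

Lemma delta_distr p : is_distr (delta p).
Proof.
split; first exact: delta_ge0.
by rewrite /rsum (bigD1 p) //= /delta eqxx big1 ?Rplus_0_r // => q /negbTE ->.
Qed.

Lemma mass_delta p S : mass (delta p) S = if p \in S then 1 else 0.
Proof.
rewrite /mass /rsum_in /delta -big_mkcondr /=.
case Hp: (p \in S).
  rewrite (big_pred1 p) // => q; apply/andP/eqP => [[_ /eqP] //|->]; split => //.
by rewrite big_pred0 // => q; apply/andP => -[Hq /eqP E]; move: Hq; rewrite E Hp.
Qed.

Lemma vmulpow_ge0 nu A : (forall t, 0 <= nu t) -> (forall p q, 0 <= A p q) ->
  forall m q, 0 <= vmulpow nu A m q.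
Proof.
move=> Hn HA; elim=> [|m IH] q //=.
by apply: rsum_ge0 => p; apply: Rmult_le_pos.
Qed.

Lemma vmulpow_distr nu A : stochastic A -> is_distr nu ->
  forall m, is_distr (vmulpow nu A m).
Proof.
move=> HA [Hn Hn1]; elim=> [|m [IHn IH1]] //=; split.
  by move=> q; apply: rsum_ge0 => p; apply: Rmult_le_pos => //; case: (HA p).
rewrite /vmul rsum_exch -IH1; apply: rsum_ext => p.
by rewrite rsum_scal; case: (HA p) => _ ->; rewrite Rmult_1_r.
Qed.

Lemma vmulpow_add nu A a b : vmulpow (vmulpow nu A a) A b = vmulpow nu A (b + a).
Proof. by elim: b => [|b IH] //=; rewrite IH. Qed.

Lemma vmulpow_stationary nu A : (forall q, vmul nu A q = nu q) ->
  forall m, vmulpow nu A m = nu.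
Proof.
move=> H; elim=> [|m IH] //=; rewrite IH; apply: functional_extensionality; exact: H.
Qed.

Lemma mass_mixture nu A m S :
  mass (vmulpow nu A m) S = rsum (fun p => nu p * mass (vmulpow (delta p) A m) S).
Proof.
have Hlin : forall q, vmulpow nu A m q = rsum (fun p => nu p * vmulpow (delta p) A m q).
  elim: m => [|m IH] q /=.
    rewrite /rsum (bigD1 q) //= /delta eqxx big1 ?Rplus_0_r; first ring.
    by move=> p /negbTE; rewrite eq_sym => ->; ring.
  rewrite /vmul (rsum_ext (g := fun r => rsum (fun p => nu p * vmulpow (delta p) A m r * A r q))).
    by rewrite rsum_exch; apply: rsum_ext => p; rewrite -rsum_scal; apply: rsum_ext => r; ring.
  by move=> r; rewrite IH /rsum big_distrl.
rewrite /mass /rsum_in (eq_bigr _ (fun q _ => Hlin q)) /rsum exchange_big.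
by apply: eq_bigr => p _; rewrite big_distrr.
Qed.

Lemma vmulpow_dominate nu A0 A c : 0 <= c -> (forall t, 0 <= nu t) ->
  (forall p q, 0 <= A0 p q) -> (forall p q, c * A0 p q <= A p q) ->
  forall m q, c ^ m * vmulpow nu A0 m q <= vmulpow nu A m q.
Proof.
move=> Hc Hn H0 H; elim=> [|m IH] q /=; first lra.
rewrite /vmul -rsum_scal; apply: rsum_le => p.
have h := vmulpow_ge0 _ _ Hn H0 m p; have hm : 0 <= c ^ m by apply: pow_le.
have -> : c * c ^ m * (vmulpow nu A0 m p * A0 p q)
        = (c ^ m * vmulpow nu A0 m p) * (c * A0 p q) by ring.
by apply: Rmult_le_compat => //; apply: Rmult_le_pos.
Qed.

Lemma mass_compl nu S : is_distr nu -> mass nu S + mass nu (~: S) = 1.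
Proof. by case=> _ <-; rewrite (rsum_split S). Qed.

Lemma mass_absorbing_mono nu A S : (forall t, 0 <= nu t) -> (forall p q, 0 <= A p q) ->
  (forall q, q \in S -> A q q = 1) ->
  forall n m, (n <= m)%nat -> mass (vmulpow nu A n) S <= mass (vmulpow nu A m) S.
Proof.
move=> Hn HA Habs n m Hnm; rewrite -(subnK Hnm).
elim: (m - n)%nat => [|k IH]; first by rewrite add0n; lra.
rewrite addSn /=; apply: Rle_trans IH _; apply: rsum_in_le => q Hq.
apply: Rle_trans (rsum_term (fun p => vmulpow nu A (k + n) p * A p q) q _).
  by rewrite Habs //; lra.
by move=> p; apply: Rmult_le_pos => //; apply: vmulpow_ge0.
Qed.

Lemma path_reach_pos {r : rel T} {A} {p s} : (forall p q, 0 <= A p q) ->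
  (forall p q, r p q -> 0 < A p q) ->
  path r p s -> 0 < vmulpow (delta p) A (size s) (last p s).
Proof.
move=> HA Hr; elim/last_ind: s => [|s x IH] /=; first by rewrite /delta eqxx; lra.
rewrite rcons_path size_rcons last_rcons => /andP [Hp Hs] /=.
apply: Rlt_le_trans (rsum_term (fun q => vmulpow (delta p) A (size s) q * A q x)
  (last p s) _).
  exact: Rmult_lt_0_compat (IH Hp) (Hr _ _ Hs).
by move=> q; apply: Rmult_le_pos => //; apply: vmulpow_ge0 => //; apply: delta_ge0.
Qed.

End MarkovOperators.

Section GeometricAbsorption.
Context {T : finType} {A : T -> T -> R} {S : {set T}} {L : nat} {d : R}.
Hypothesis HA : stochastic A.
Hypothesis Habs : forall q, q \in S -> A q q = 1.
Hypothesis Hd : 0 < d <= 1.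
Hypothesis Hreach : forall p, d <= mass (vmulpow (delta p) A L) S.

Lemma leak_from_state p :
  mass (vmulpow (delta p) A L) (~: S) <= (1 - d) * mass (delta p) (~: S).
Proof.
have Hcompl := mass_compl _ S (vmulpow_distr _ _ HA (delta_distr p) L).
rewrite mass_delta inE; case Hp: (p \in S) => /=.
  have := mass_absorbing_mono (delta p) A S (@delta_ge0 _ p) (stochastic_ge0 _ HA) Habs _ _ (leq0n L).
  by rewrite /= mass_delta Hp; lra.
by have := Hreach p; lra.
Qed.

Lemma leak_contract nu : (forall t, 0 <= nu t) ->
  mass (vmulpow nu A L) (~: S) <= (1 - d) * mass nu (~: S).
Proof.
move=> Hn; rewrite mass_mixture [mass nu _](mass_mixture nu A 0) -rsum_scal.
apply: rsum_le => p /=; have := leak_from_state p; have := Hn p; nra.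
Qed.

Lemma mass_geometric k nu : is_distr nu -> 1 - (1 - d) ^ k <= mass (vmulpow nu A (k * L)) S.
Proof.
move=> Hnu; have [Hn _] := Hnu.
suff Hleak : mass (vmulpow nu A (k * L)) (~: S) <= (1 - d) ^ k * mass nu (~: S).
  have := mass_compl _ S Hnu; have := mass_compl _ S (vmulpow_distr _ _ HA Hnu (k * L)).
  have := rsum_in_ge0 S nu Hn; have : 0 <= (1 - d) ^ k by apply: pow_le; lra.
  rewrite /mass in Hleak *; nra.
elim: k => [|k IH]; first by rewrite mul0n /=; lra.
rewrite mulSn -vmulpow_add.
apply: Rle_trans (leak_contract _ (vmulpow_ge0 _ _ Hn (stochastic_ge0 _ HA) (k * L))) _.
by rewrite /= Rmult_assoc; apply: Rmult_le_compat_l; lra.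
Qed.

End GeometricAbsorption.

Section IdealizedChain.
Context {N : nat} {X : finType} {U : 'I_N -> finType} (G : game N X U).
Hypothesis HG : game_ok G.
Variable lam : 'I_N -> R.
Hypothesis Hlam : forall i, 0 < lam i < 1.

Definition rates_le (kb : R) (gam kap : 'I_N -> R) : Prop :=
  forall i, 0 <= gam i <= kb /\ 0 <= kap i <= kb.

Lemma rates_le_weaken {kb} kb' {gam kap} :
  rates_le kb gam kap -> kb <= kb' -> rates_le kb' gam kap.
Proof. by move=> H Hk i; have := H i; lra. Qed.

Lemma rates_le_of_max {kbar gam kap} :
  (forall i, 0 < gam i /\ 0 < kap i /\ Rmax (gam i) (kap i) < kbar) -> rates_le kbar gam kap.
Proof.
move=> H i; have [h1 [h2 h3]] := H i.
by have := Rmax_l (gam i) (kap i); have := Rmax_r (gam i) (kap i); lra.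
Qed.

Definition A0 : jpol X U -> jpol X U -> R := Amat G lam (fun _ => 0) (fun _ => 0).

Lemma A0E p q : A0 p q = \big[Rmult/1]_(i : 'I_N) Rkern (lam i) (p i) (BR G i p) (q i).
Proof. by apply: eq_bigr => i _ /=; case: (p \in Popt G); rewrite /Rdiv; ring. Qed.

Lemma card_pol_gt0 (p : jpol X U) i : 0 < INR #|pol X U i|.
Proof. by apply: lt_0_INR; apply/ltP/card_gt0P; exists (p i). Qed.

(* Each row of Amat is a product of independent per-DM distributions. *)
Lemma Amat_stochastic gam kap : rates_le 1 gam kap -> stochastic (Amat G lam gam kap).
Proof.
move=> Hr p.
have Hfactor i e : 0 <= e <= 1 ->
    is_distr (fun s => (1 - e) * Rkern (lam i) (p i) (BR G i p) s + e / INR #|pol X U i|).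
  move=> He; have Hc := card_pol_gt0 p i.
  have He' : 0 <= e / INR #|pol X U i| by apply: Rle_mult_inv_pos; lra.
  split=> [s|].
    by have := Rkern_ge0 (lam i) (p i) (BR G i p) (Hlam i) s; nra.
  have [b Hb] := BR_nonempty _ HG i p.
  rewrite rsum_add rsum_scal Rkern_sum; last by exists b.
  by rewrite rsum_const; field; lra.
have Hrow i : is_distr (fun s => let e := if p \in Popt G then gam i else kap i in
    (1 - e) * Rkern (lam i) (p i) (BR G i p) s + e / INR #|pol X U i|).
  by case: (p \in Popt G); apply: Hfactor; case: (Hr i).
split=> [q|].
  by apply: (big_ind (Rle 0)) => [|x y|j _]; [lra | nra | case: (Hrow j)].
pose F i := [ffun s => let e := if p \in Popt G then gam i else kap i in
    (1 - e) * Rkern (lam i) (p i) (BR G i p) s + e / INR #|pol X U i|].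
rewrite /rsum /Amat (eq_bigr (fun q : jpol X U => \big[Rmult/1]_i F i (q i))); last first.
  by move=> q _; apply: eq_bigr => i _; rewrite ffunE.
rewrite sum_dffun_prod big1 // => i _; case: (Hrow i) => _ <-.
by apply: eq_bigr => s _; rewrite ffunE.
Qed.

Lemma Amat_dominates gam kap kb : 0 <= kb <= 1 -> rates_le kb gam kap ->
  forall p q, (1 - kb) ^ N * A0 p q <= Amat G lam gam kap p q.
Proof.
move=> Hkb Hr p q.
rewrite A0E -{1}(card_ord N) -prod_const -big_split /=.
rewrite /Amat; apply: (proj2 (prod_le _ _ _ _)) => i /=.
have Hk := Rkern_ge0 (lam i) (p i) (BR G i p) (Hlam i) (q i).
have Hc := card_pol_gt0 p i.
have He e : 0 <= e <= kb -> 0 <= (1 - kb) * Rkern (lam i) (p i) (BR G i p) (q i) <=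
    (1 - e) * Rkern (lam i) (p i) (BR G i p) (q i) + e / INR #|pol X U i|.
  move=> He; have : 0 <= e / INR #|pol X U i| by apply: Rle_mult_inv_pos; lra.
  by move=> ?; split; nra.
by case: (p \in Popt G); apply: He; case: (Hr i).
Qed.

Lemma A0_stochastic : stochastic A0.
Proof. by apply: Amat_stochastic => i; lra. Qed.

Lemma A0_absorbing p : p \in Peq G -> A0 p p = 1.
Proof.
move=> Hp; rewrite A0E big1 // => i _; apply: Rkern_stay.
by move: Hp; rewrite inE => /forallP.
Qed.

Lemma strict_br_notin p i (s : pol X U i) : strict_br G p s -> p i \notin BR G i p.
Proof.
case/andP => _ /existsP [x /RltbP Hx]; apply/negP; rewrite inE.
by move=> /forallP /(_ x) /forallP /(_ s) /RlebP; rewrite upd_id; lra.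
Qed.

Lemma A0_sbr_pos p q : sbr_step G p q -> 0 < A0 p q.
Proof.
case/andP => _ /forallP Hstep; rewrite A0E; apply: prod_gt0 => i.
case: (eqVneq (q i) (p i)) => [-> | Hne]; first exact: Rkern_keep_pos.
have Hs := implyP (Hstep i) Hne.
by apply: Rkern_switch_pos; [| exact: strict_br_notin Hs | by case/andP: Hs].
Qed.

Hypothesis Hwa : weakly_acyclic G.

Lemma uniform_reach : exists L d, 0 < d <= 1 /\
  forall p, d <= mass (vmulpow (delta p) A0 L) (Peq G).
Proof.
case: (pickP (fun _ : jpol X U => true)) => [p0 _|Hempty]; last first.
  by exists O, 1; split=> [|p]; [lra | have := Hempty p].
pose sbr_path p := proj1_sig (constructive_indefinite_description _ (Hwa p)).
have Hpath p : path (@sbr_step N X U G) p (sbr_path p) && (last p (sbr_path p) \in Peq G).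
  exact: proj2_sig (constructive_indefinite_description _ (Hwa p)).
pose L := \max_p size (sbr_path p).
have [p1 Hp1] := exists_min p0 (fun p => mass (vmulpow (delta p) A0 L) (Peq G)).
exists L, (mass (vmulpow (delta p1) A0 L) (Peq G)); split; last exact: Hp1.
have Hdistr := vmulpow_distr _ _ A0_stochastic (delta_distr p1).
have [/(path_reach_pos (stochastic_ge0 _ A0_stochastic) A0_sbr_pos) Hpos Hlast] :=
  andP (Hpath p1).
split; last by have := mass_compl _ (Peq G) (Hdistr L);
  have := rsum_in_ge0 (~: Peq G) _ (proj1 (Hdistr L)); rewrite /mass; lra.
apply: Rlt_le_trans Hpos _.
apply: Rle_trans (rsum_in_term (Peq G) _ _ (proj1 (Hdistr _)) Hlast) _.
apply: (mass_absorbing_mono _ _ _ (@delta_ge0 _ p1) (stochastic_ge0 _ A0_stochastic)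
  A0_absorbing).
exact: (@leq_bigmax _ (fun p => size (sbr_path p)) p1).
Qed.

Lemma unperturbed_concentration t : 0 < t ->
  exists M, forall nu, is_distr nu -> 1 - t <= mass (vmulpow nu A0 M) (Peq G).
Proof.
move=> Ht; have [L [d [Hd Hreach]]] := uniform_reach.
have [K HK] := pow_lt_1_zero (1 - d) ltac:(rewrite Rabs_pos_eq; lra) t Ht.
exists (K * L)%nat => nu Hnu.
have := mass_geometric A0_stochastic A0_absorbing Hd Hreach K nu Hnu.
by have := HK K (le_n K); have := Rle_abs ((1 - d) ^ K); lra.
Qed.

Lemma perturbed_mass gam kap kb M nu : 0 <= kb <= 1 -> rates_le kb gam kap -> is_distr nu ->
  (1 - kb) ^ (N * M) * mass (vmulpow nu A0 M) (Peq G)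
  <= mass (vmulpow nu (Amat G lam gam kap) M) (Peq G).
Proof.
move=> Hkb Hr [Hn _]; rewrite pow_mult /mass -rsum_in_scal; apply: rsum_in_le => q _.
apply: vmulpow_dominate => //; first by apply: pow_le; lra.
  exact: stochastic_ge0 _ A0_stochastic.
exact: Amat_dominates.
Qed.

End IdealizedChain.

Lemma bernoulli x n : 0 <= x <= 1 -> 1 - INR n * x <= (1 - x) ^ n.
Proof.
move=> Hx; elim: n => [|n IH]; first by simpl; lra.
rewrite S_INR /=.
have h : 0 <= (1 - x) ^ n by apply: pow_le; lra.
have h2 := pos_INR n.
have h3 : (1 - x) * (1 - INR n * x) <= (1 - x) * (1 - x) ^ n by apply: Rmult_le_compat_l; lra.
have h4 : 0 <= INR n * (x * x) by apply: Rmult_le_pos; nra.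
nra.
Qed.

Lemma small_rate t n : 0 < t -> exists kb, 0 < kb <= 1/2 /\ 1 - t <= (1 - kb) ^ n.
Proof.
move=> Ht; have Hn := pos_INR n.
have Hq : 0 < t / (INR n + 1) by apply: Rdiv_lt_0_compat; lra.
set kb := Rmin (1/2) (t / (INR n + 1)).
have Hkb : 0 < kb <= 1/2 by split; [apply: Rmin_pos; lra | exact: Rmin_l].
exists kb; split=> //; apply: Rle_trans (bernoulli kb n ltac:(lra)).
have : INR n * kb <= INR n * (t / (INR n + 1)) by apply: Rmult_le_compat_l => //; exact: Rmin_r.
have -> : INR n * (t / (INR n + 1)) = t - t / (INR n + 1) by field; lra.
lra.
Qed.

Theorem lemma3 (N : nat) (X : finType) (U : 'I_N -> finType) (G : game N X U)
  (HG : game_ok G) (Hwa : weakly_acyclic G)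
  (lam : 'I_N -> R) (Hlam : forall i, 0 < lam i < 1)
  (eps : R) (Heps : 0 < eps) :
  exists kbar : R, 0 < kbar < 1 /\
    (forall gam kap : 'I_N -> R,
       (forall i, 0 < gam i /\ 0 < kap i /\ Rmax (gam i) (kap i) < kbar) ->
       forall mu : jpol X U -> R, stationary (Amat G lam gam kap) mu ->
         mass mu (Peq G) >= 1 - eps / 4) /\
    (exists mbar : nat,
       forall gam kap : 'I_N -> R,
       (forall i, 0 < gam i /\ 0 < kap i /\ Rmax (gam i) (kap i) < kbar) ->
       forall (m : nat) (mu0 : jpol X U -> R), (mbar <= m)%nat -> is_distr mu0 ->
         mass (vmulpow mu0 (Amat G lam gam kap) m) (Peq G) >= 1 - eps / 2).
Proof.
pose t := Rmin (eps / 8) (1 / 2).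
have Ht : 0 < t by apply: Rmin_pos; lra.
have Ht_half : t <= 1 / 2 by exact: Rmin_r.
have Ht_eps : t <= eps / 8 by exact: Rmin_l.
have [M HM] := unperturbed_concentration G HG lam Hlam Hwa t Ht.
have [kbar [Hkbar Hpow]] := small_rate t (N * M) Ht.
have Hconc (gam kap : 'I_N -> R) nu :
    (forall i, 0 < gam i /\ 0 < kap i /\ Rmax (gam i) (kap i) < kbar) -> is_distr nu ->
    1 - eps / 4 <= mass (vmulpow nu (Amat G lam gam kap) M) (Peq G).
  move=> Hgk Hnu.
  have Hpert := perturbed_mass G HG lam Hlam gam kap kbar M nu ltac:(lra)
    (rates_le_of_max Hgk) Hnu.
  have Hprod : (1 - t) * (1 - t)
      <= (1 - kbar) ^ (N * M) * mass (vmulpow nu (A0 G lam) M) (Peq G).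
    by apply: Rmult_le_compat; [lra | lra | exact: Hpow | exact: HM].
  nra.
exists kbar; split; first lra; split.
  move=> gam kap Hgk mu [Hmu Hstat]; apply: Rle_ge.
  by rewrite -(vmulpow_stationary _ _ Hstat M); apply: Hconc.
exists M => gam kap Hgk m mu0 Hm Hmu0; apply: Rle_ge.
have HA := Amat_stochastic G HG lam Hlam _ _ (rates_le_weaken 1 (rates_le_of_max Hgk) ltac:(lra)).
rewrite -(subnKC Hm) -vmulpow_add.
by have := Hconc _ _ _ Hgk (vmulpow_distr _ _ HA Hmu0 (m - M)); lra.
Qed.
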